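(* Let $k\ge2$ and let $G,H$ be connected graphs. Let $w\in V(G)$ and $w'\in V(H)$ be vertices such that $G-\{w\}$ is connected and $H-\{w'\}$ is disconnected. Then $\chi^k_G(w)\ne\chi^k_H(w')$.
   Context: Graphs are finite, simple, undirected (possibly colored; uncolored graphs are monochromatic). For $k\ge2$, the $k$-dimensional Weisfeiler–Leman algorithm computes a coloring of $V(G)^k$: the initial color of a tuple consists of its input color and the isomorphism type of the ordered induced subgraph on its entries; in each round the new color of $\bar v$ is the pair of its old color and the multiset, over $w\in V(G)$, of the $k$-tuples whose $i$-th component is the old color of $\bar v$ with its $i$-th entry replaced by $w$; the stable coloring is $\chi^k_G$, with canonical colors comparable across graphs. For a vertex $w$, $\chi^k_G(w):=\chi^k_G(w,\dots,w)$. *)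

From mathcomp Require Import all_boot.
Set Implicit Arguments. Unset Strict Implicit. Unset Printing Implicit Defensive.

(* A graph is given by a finite vertex type T, an edge relation e (assumed
   symmetric and irreflexive in the theorem) and a vertex colouring
   c : T -> nat (uncoloured graphs = constant colouring).
   Colours of the k-WL algorithm are canonical values of type
   GenTree.tree nat, hence comparable across graphs. *)

Notation wlcolor := (GenTree.tree nat).

(* canonical representation of a multiset of colours: sort by the
   (injective) pickle encoding *)
Definition mset (s : seq wlcolor) : seq wlcolor :=
  sort (fun a b : wlcolor => pickle a <= pickle b) s.

Section WL.
Variables (k : nat) (T : finType) (e : rel T) (c : T -> nat).

Definition upd (v : 'I_k -> T) (i : 'I_k) (w : T) : 'I_k -> T :=
  fun j => if j == i then w else v j.

(* initial colour: input colours of the entries, and the isomorphism type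
   of the ordered induced subgraph (equality and adjacency pattern) *)
Definition wl_init (v : 'I_k -> T) : wlcolor :=
  GenTree.Node 0
    [:: GenTree.Node 1 [seq GenTree.Leaf (c (v i)) | i <- enum 'I_k];
        GenTree.Node 2 [seq GenTree.Leaf (nat_of_bool (v i == v j))
                         | i <- enum 'I_k, j <- enum 'I_k];
        GenTree.Node 3 [seq GenTree.Leaf (nat_of_bool (e (v i) (v j)))
                         | i <- enum 'I_k, j <- enum 'I_k]].

Fixpoint wl_round (r : nat) (v : 'I_k -> T) : wlcolor :=
  match r with
  | 0 => wl_init v
  | r'.+1 =>
      GenTree.Node 4
        [:: wl_round r' v;
            GenTree.Node 5
              (mset [seq GenTree.Node 6 [seq wl_round r' (upd v i w) | i <- enum 'I_k]
                    | w <- enum T])]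
  end.

(* the stable colour chi^k_G(v): the (canonical) limit of the refinement,
   represented by the whole sequence of round colours; two tuples (possibly
   in different graphs) get the same stable colour iff they agree in every
   round. *)
Definition wl_stable (v : 'I_k -> T) : nat -> wlcolor := fun r => wl_round r v.

Definition wl_vertex (w : T) : nat -> wlcolor := wl_stable (fun _ => w).

End WL.

Definition simple_graph (T : finType) (e : rel T) : Prop :=
  symmetric e /\ irreflexive e.

Definition connected_graph (T : finType) (e : rel T) : Prop :=
  forall x y : T, connect e x y.

Definition connected_minus (T : finType) (e : rel T) (w : T) : Prop :=
  forall x y : T, x != w -> y != w ->
    connect (fun a b => [&& e a b, a != w & b != w]) x y.

From mathcomp Require Import all_boot.
From Stdlib Require Import Classical_Prop.
Set Implicit Arguments. Unset Strict Implicit. Unset Printing Implicit Defensive.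

(* Pick a' and b' in different components of H - w'.  Playing the bijective
   pebble game on (w,...,w) ~ (w',...,w') twice yields a, b in G such that,
   on two fixed coordinates (all others holding w, resp. w'), the tuples
   (a, w), (b, w), (a, b) have the stable colours of (a', w'), (b', w'),
   (a', b').  The colour of a pair determines the number of walks between its
   entries and the number of walks from its first entry that reach the second
   one only at their end.  Splitting every a-b walk at its first visit to w
   expresses the number of a-b walks avoiding w through these pair counts, so
   these numbers coincide in G and H; for some length they are positive in G,
   because G - w is connected, and they are always zero in H. *)

Section Walks.
Variables (T : finType) (e : rel T).

Fixpoint walk_count n (x y : T) : nat :=
  if n is n'.+1 then \sum_z e x z * walk_count n' z y else x == y.

Fixpoint first_visit_count (w : T) n (x : T) : nat :=
  if n is n'.+1 then (x != w) * \sum_z e x z * first_visit_count w n' z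
  else x == w.

Fixpoint avoid_count (w : T) n (x y : T) : nat :=
  if n is n'.+1 then (x != w) * \sum_z e x z * avoid_count w n' z y
  else (x == y) && (x != w).

Definition avoid_rel (w : T) := fun a b => [&& e a b, a != w & b != w].

Lemma walk_count_first_visit w n x y :
  walk_count n x y =
  avoid_count w n x y + \sum_(i < n.+1) first_visit_count w i x * walk_count (n - i) w y.
Proof.
elim: n x => [|n IHn] x.
  rewrite big_ord1 /=; case: (eqVneq x w) => [->|xw]; first by case: (w == y).
  by rewrite andbT addn0.
rewrite big_ord_recl subn0 /=; case: (eqVneq x w) => [->|xw].
  by rewrite !mul0n mul1n add0n [X in _ + X]big1 ?addn0 // => i _; rewrite !mul0n.
rewrite !mul1n mul0n !add0n.
under eq_bigr do rewrite IHn mulnDr big_distrr.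
rewrite big_split /= exchange_big; congr (_ + _); apply: eq_bigr => i _.
rewrite mul1n add0n /bump leq0n add1n subSS big_distrl.
by apply: eq_bigr => z _; rewrite mulnA.
Qed.

Lemma avoid_count_gt0_neq w n x y : 0 < avoid_count w n x y -> x != w.
Proof. by case: n => [|n] /=; case: (x != w); rewrite ?andbF. Qed.

Lemma connect_avoid_countP w x y :
  x != w -> connect (avoid_rel w) x y <-> exists n, 0 < avoid_count w n x y.
Proof.
move=> xw; split.
  case/connectP => p + ->; elim: p x xw => [|z p IHp] x xw /=.
    by exists 0; rewrite /= eqxx xw.
  case/andP => /and3P [exz _ zw] /(IHp z zw) [n avoid_zy].
  exists n.+1; rewrite /= xw mul1n (bigD1 z) //= exz mul1n.
  exact: leq_trans avoid_zy (leq_addr _ _).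
case=> n; elim: n x {xw} => [|n IHn] x /=.
  by case: (eqVneq x y) => [->|]; rewrite ?connect0.
rewrite muln_gt0 lt0b => /andP [xw]; rewrite lt0n sum_nat_eq0 => /forallPn [z].
rewrite /= -lt0n muln_gt0 lt0b => /andP [exz avoid_zy].
apply: connect_trans (IHn z avoid_zy); apply: connect1.
by rewrite /avoid_rel exz xw (avoid_count_gt0_neq avoid_zy).
Qed.

Lemma avoid_countE w n x y :
  avoid_count w n x y =
  walk_count n x y - \sum_(i < n.+1) first_visit_count w i x * walk_count (n - i) w y.
Proof. by rewrite (walk_count_first_visit w) addnK. Qed.

End Walks.

Lemma eq_in_allpairs (S T : eqType) R (f g : S -> T -> R) s t :
  [seq f x y | x <- s, y <- t] = [seq g x y | x <- s, y <- t] -> {in s & t, f =2 g}.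
Proof.
rewrite -(map_allpairs (fun p => f p.1 p.2) pair).
rewrite -(map_allpairs (fun p => g p.1 p.2) pair) => /eq_in_map fg x y xs yt.
by apply: (fg (x, y)); apply/allpairsP; exists (x, y).
Qed.

Lemma eq_big_perm_map (R : Type) (idx : R) (op : Monoid.com_law idx)
    (A B C : eqType) (s : seq A) (s' : seq B) (c : A -> C) (c' : B -> C)
    (F : A -> R) (F' : B -> R) :
  perm_eq (map c s) (map c' s') ->
  (forall x x', c x = c' x' -> F x = F' x') ->
  \big[op/idx]_(x <- s) F x = \big[op/idx]_(x <- s') F' x.
Proof.
move=> + FF'; elim: s s' => [|x s IHs] s' cs_cs'.
  by case: s' cs_cs' => [_|y s' /perm_size //]; rewrite !big_nil.
have : c x \in map c' s' by rewrite -(perm_mem cs_cs') mem_head.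
case/mapP => x' x's' cx.
rewrite (perm_big _ (perm_to_rem x's')) !big_cons (FF' _ _ cx) (IHs (rem x' s')) //.
rewrite -(perm_cons (c x)) {2}cx -map_cons.
exact: perm_trans cs_cs' (perm_map c' (perm_to_rem x's')).
Qed.

Lemma ex_forall_antitone (X : finType) (P : nat -> pred X) :
  (forall r x, P r.+1 x -> P r x) -> (forall r, exists x, P r x) ->
  exists x, forall r, P r x.
Proof.
move=> P_antitone P_nonempty; apply: NNPP => no_common.
have fails x : exists r, ~~ P r x.
  apply: NNPP => holds; apply: no_common; exists x => r.
  by apply: NNPP => /negP nP; apply: holds; exists r.
have [x Px] := P_nonempty (\max_y ex_minn (fails y)).
have P_le r1 r2 : r1 <= r2 -> P r2 x -> P r1 x.
  apply: (@homo_leq bool (P^~ x) (fun a b => b -> a)) => // [a b c ba cb /cb/ba //|].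
  by move=> r; apply: P_antitone.
have := P_le _ _ (leq_bigmax x) Px; case: ex_minnP => r.
by move=> /negbTE ->.
Qed.

Definition upd_colors k (T : finType) (e : rel T) (c : T -> nat) r (v : 'I_k -> T) z :=
  GenTree.Node 6 [seq wl_round e c r (upd v i z) | i <- enum 'I_k].

Section WLCorrespondence.
Variables (k : nat) (TG TH : finType) (eG : rel TG) (eH : rel TH).
Variables (cG : TG -> nat) (cH : TH -> nat).
Local Notation RG r v := (@wl_round k _ eG cG r v).
Local Notation RH r v := (@wl_round k _ eH cH r v).

Lemma wl_round_eq_le r1 r2 v v' : r1 <= r2 -> RG r2 v = RH r2 v' -> RG r1 v = RH r1 v'.
Proof.
move=> le; apply: (@homo_leq Prop (fun r => RG r v = RH r v') (fun A B => B -> A)) le => //.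
- by move=> A B C BA CB /CB/BA.
- by move=> r [].
Qed.

Lemma wl_round_eq_atomic r v v' : RG r v = RH r v' -> forall i j,
  (v i == v j) = (v' i == v' j) /\ eG (v i) (v j) = eH (v' i) (v' j).
Proof.
move=> /(wl_round_eq_le (leq0n r)) [_ eqs adjs] i j.
have i_in : i \in enum 'I_k by rewrite mem_enum.
have j_in : j \in enum 'I_k by rewrite mem_enum.
move: (eq_in_allpairs eqs i_in j_in) (eq_in_allpairs adjs i_in j_in).
by case: (v i == v j); case: (v' i == v' j); case: (eG _ _); case: (eH _ _).
Qed.

Lemma wl_round_succ_perm r v v' : RG r.+1 v = RH r.+1 v' ->
  perm_eq [seq upd_colors eG cG r v z | z <- enum TG]
          [seq upd_colors eH cH r v' z | z <- enum TH].
Proof.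
move=> [_]; rewrite /mset => sorted_eq.
by rewrite -(perm_sort (fun a b : wlcolor => pickle a <= pickle b)) sorted_eq perm_sort.
Qed.

Lemma upd_colors_eq r v v' z z' :
  upd_colors eG cG r v z = upd_colors eH cH r v' z' ->
  forall i, RG r (upd v i z) = RH r (upd v' i z').
Proof. by move=> [/eq_in_map same] i; apply: same; rewrite mem_enum. Qed.

Lemma wl_round_succ_match r v v' z' : RG r.+1 v = RH r.+1 v' ->
  exists z, forall i, RG r (upd v i z) = RH r (upd v' i z').
Proof.
move=> /wl_round_succ_perm/perm_mem same.
have : upd_colors eH cH r v' z' \in [seq upd_colors eH cH r v' z | z <- enum TH].
  by rewrite map_f ?mem_enum.
by rewrite -same => /mapP [z _ /esym/upd_colors_eq]; exists z.
Qed.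

Lemma wl_round_succ_sum r v v' (F : TG -> nat) (F' : TH -> nat) :
  RG r.+1 v = RH r.+1 v' ->
  (forall z z', (forall i, RG r (upd v i z) = RH r (upd v' i z')) -> F z = F' z') ->
  \sum_z F z = \sum_z' F' z'.
Proof.
move=> /wl_round_succ_perm same FF'; rewrite -!big_enum.
by apply: (@eq_big_perm_map _ _ addn _ _ _ _ _ _ _ _ _ same) => z z' /upd_colors_eq /FF'.
Qed.

Lemma wl_stable_upd_match v v' z' : (forall r, RG r v = RH r v') ->
  exists z, forall r i, RG r (upd v i z) = RH r (upd v' i z').
Proof.
move=> same.
pose P r z := [forall i, RG r (upd v i z) == RH r (upd v' i z')].
have [z Pz] : exists z, forall r, P r z.
  apply: ex_forall_antitone => [r z /forallP Pz | r].
    by apply/forallP => i; apply/eqP/(wl_round_eq_le (leqnSn r))/eqP/Pz.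
  have [z same_upd] := wl_round_succ_match z' (same r.+1).
  by exists z; apply/forallP => i; rewrite same_upd.
by exists z => r i; apply/eqP/(forallP (Pz r)).
Qed.

Section TwoPebbles.
Variables (i0 i1 : 'I_k) (i10 : i1 != i0).

Lemma wl_round_succ_sum_adj r v v' (F : TG -> nat) (F' : TH -> nat) :
  RG r.+1 v = RH r.+1 v' ->
  (forall z z', RG r (upd v i0 z) = RH r (upd v' i0 z') -> F z = F' z') ->
  \sum_z eG (v i0) z * F z = \sum_z' eH (v' i0) z' * F' z'.
Proof.
move=> same FF'; apply: (wl_round_succ_sum same) => z z' same_upd.
have [_] := wl_round_eq_atomic (same_upd i1) i0 i1.
by rewrite /upd eqxx eq_sym (negbTE i10) (FF' _ _ (same_upd i0)) => ->.
Qed.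

Lemma walk_count_wl n v v' : RG n v = RH n v' ->
  walk_count eG n (v i0) (v i1) = walk_count eH n (v' i0) (v' i1).
Proof.
elim: n v v' => [|n IHn] v v' same.
  by have [/= -> _] := wl_round_eq_atomic same i0 i1.
by apply: (wl_round_succ_sum_adj same) => z z' /IHn; rewrite /upd eqxx (negbTE i10).
Qed.

Lemma first_visit_count_wl n v v' : RG n v = RH n v' ->
  first_visit_count eG (v i1) n (v i0) = first_visit_count eH (v' i1) n (v' i0).
Proof.
elim: n v v' => [|n IHn] v v' same.
  by have [/= -> _] := wl_round_eq_atomic same i0 i1.
have [/= -> _] := wl_round_eq_atomic same i0 i1; congr (_ * _).
by apply: (wl_round_succ_sum_adj same) => z z' /IHn; rewrite /upd eqxx (negbTE i10).
Qed.

End TwoPebbles.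

Lemma avoid_count_wl (i0 i1 : 'I_k) (i10 : i1 != i0) n v v' b b' :
  RG n v = RH n v' -> RG n (upd v i0 b) = RH n (upd v' i0 b') ->
  RG n (upd v i1 b) = RH n (upd v' i1 b') ->
  avoid_count eG (v i1) n (v i0) b = avoid_count eH (v' i1) n (v' i0) b'.
Proof.
move=> same same0 same1; rewrite !avoid_countE.
have i01 : i0 != i1 by rewrite eq_sym.
congr (_ - _).
  by have := walk_count_wl i10 same1; rewrite /upd eqxx (negbTE i01).
apply: eq_bigr => i _; have le_in : i <= n by rewrite -ltnS.
rewrite (first_visit_count_wl i10 (wl_round_eq_le le_in same)).
have := walk_count_wl i01 (wl_round_eq_le (leq_subr i n) same0).
by rewrite /upd eqxx (negbTE i10) => ->.
Qed.

End WLCorrespondence.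

Theorem corollary7 (k : nat) (hk : 2 <= k)
  (TG : finType) (eG : rel TG) (cG : TG -> nat)
  (TH : finType) (eH : rel TH) (cH : TH -> nat)
  (w : TG) (w' : TH) :
  simple_graph eG -> simple_graph eH ->
  connected_graph eG -> connected_graph eH ->
  connected_minus eG w -> ~ connected_minus eH w' ->
  wl_vertex k eG cG w <> wl_vertex k eH cH w'.
Proof.
move=> _ _ _ _ G_w_conn H_w'_disconn same_color.
have [a' [b' [a'w' [b'w' a'b'_disconn]]]] :
    exists a' b', [/\ a' != w', b' != w' & ~ connect (avoid_rel eH w') a' b'].
  apply: NNPP => all_conn; apply: H_w'_disconn => x y xw' yw'.
  by apply: NNPP => xy_disconn; apply: all_conn; exists x, y.
pose i0 : 'I_k := Ordinal (ltnW hk); pose i1 : 'I_k := Ordinal hk.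
have i10 : i1 != i0 by [].
have same_w r : wl_round eG cG r (fun=> w) = wl_round eH cH r (fun=> w') :=
  congr1 (fun f => f r) same_color.
have [a same_a] := wl_stable_upd_match a' same_w.
have [b same_ab] := wl_stable_upd_match b' (same_a^~ i0).
have aw : a != w.
  by have [/=] := wl_round_eq_atomic (same_a 0 i0) i0 i1; rewrite /upd /= => ->.
have bw : b != w.
  by have [/=] := wl_round_eq_atomic (same_ab 0 i0) i0 i1; rewrite /upd /= => ->.
have [n ab_avoid] := (connect_avoid_countP eG b aw).1 (G_w_conn a b aw bw).
apply: a'b'_disconn; apply/(connect_avoid_countP _ _ a'w'); exists n.
by rewrite -(avoid_count_wl i10 (same_a n i0) (same_ab n i0) (same_ab n i1)).
Qed.
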